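(* Let $n\ge 2$, $k\ge 1$, and let $f_i(x)=\frac12 a_ix^2-b_ix$ ($i=1,\dots,n$) be univariate functions satisfying Assumption (B) with parameters $\lambda,L,G$, where $F(x)=\frac1n\sum_{i=1}^n f_i(x)=\frac{\lambda}{2}x^2-bx$. Assume $\frac{L}{\lambda}\le\frac{k}{2\log(nk)}$. Then SGD with random reshuffling, run for $k$ epochs from an arbitrary $x_0\in\mathbb{R}$ with constant step size $\eta=\frac{\log(nk)}{\lambda nk}$, satisfies \[ \mathbb{E}\Big[F(x_k)-\inf_xF(x)\Big]\;\le\;\tilde{O}\left(\frac{\lambda}{n^2k^2}(x_0-x^* )^2+\frac{G^2L^2}{\lambda^3}\left(\frac{1}{n^2k^2}+\frac{1}{nk^3}\right)\right), \] where $x^*=\arg\min_x F(x)$, the expectation is over the $k$ independent uniformly random permutations, and $\tilde O(\cdot)$ hides a universal multiplicative constant and factors polylogarithmic in $n$ and $k$.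
   Context: Assumption (B) (parameters $\lambda,L,G>0$): $F(x)=\frac1n\sum_{i=1}^nf_i(x)$ is $\lambda$-strongly convex on $\mathbb{R}$; each $f_i(x)=\frac{a_i}{2}x^2-b_ix$ is convex (i.e. $a_i\ge 0$), has $L$-Lipschitz derivative (i.e. $a_i\le L$), and satisfies $|f_i'(x^* )|\le G$ where $x^*=\arg\min_xF(x)$. SGD with random reshuffling: for each of $k$ epochs, a fresh uniformly random permutation $\sigma_t$ of $\{1,\dots,n\}$ (independent across epochs) is drawn and the updates $x\leftarrow x-\eta f_{\sigma_t(j)}'(x)$ are performed for $j=1,\dots,n$ in order; $x_t$ is the iterate at the end of epoch $t$. *)

From mathcomp Require Import all_boot all_fingroup.
From Stdlib Require Import Reals.
Set Implicit Arguments. Unset Strict Implicit. Unset Printing Implicit Defensive.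
Local Open Scope R_scope.

Definition rsum (n : nat) (f : 'I_n -> R) : R := \big[Rplus/R0]_(i < n) f i.

Definition psum (n : nat) (f : 'S_n -> R) : R := \big[Rplus/R0]_(s : 'S_n) f s.

Definition fcomp (a b : R) (x : R) : R := (a / 2) * x * x - b * x.

Definition Fobj (n : nat) (a b : 'I_n -> R) (x : R) : R :=
  (/ INR n) * rsum (fun i => fcomp (a i) (b i) x).

Definition epoch (n : nat) (a b : 'I_n -> R) (eta : R) (s : 'S_n) (x : R) : R :=
  foldl (fun (y : R) (j : 'I_n) => y - eta * (a (s j) * y - b (s j))) x (enum 'I_n).

(* expect_after k x = E[ g(x_k) ] where x_0 = x and x_{t} = epoch sigma_t x_{t-1},
   the sigma_t being independent uniformly random permutations of 'I_n. *)
Fixpoint expect_after (n : nat) (step : 'S_n -> R -> R) (g : R -> R)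
    (k : nat) (x : R) : R :=
  match k with
  | O => g x
  | S k' => (/ INR (n`!)) * psum (fun s => expect_after step g k' (step s x))
  end.

(* Write [q_i = 1 - eta a_i] and [g_i = f_i'(xs) = a_i xs - b_i].  One epoch
   along a permutation [s] is an affine map of the error:
       x_end - xs  =  P (x - xs) + N_s,      P = prod_i q_i,
   where the contraction factor [P] does not depend on [s] and the noise [N_s]
   is an explicit polynomial in the [q]'s and [g]'s.  Since sum_i g_i = 0
   (first-order optimality of [F]), exchanging two entries of the permutation
   shows that the mean of [N_s] is only O(eta^2 n L G), and an Abel
   summation together with a second-moment bound for partial sums of a
   uniformly permuted mean-zero sequence gives E[N_s^2] = O(eta^4 L^2 n^3 G^2).
   Hence E[(x_end - xs)^2] <= r (x - xs)^2 + D with r = (1 + 1/k) P^2, and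
   iterating over the k epochs bounds E[F(x_k) - F(xs)] = lam/2 E[(x_k-xs)^2].
   The step size eta = ln(nk)/(lam n k) makes P <= (nk)^(-1/k), hence
   r^k = O(1/(nk)^2), and the bound follows with C = 100 and ln(nk)^4. *)

From mathcomp Require Import all_boot all_fingroup.
From Stdlib Require Import Reals Lra Psatz.
From HB Require Import structures.
Set Implicit Arguments. Unset Strict Implicit.
Open Scope R_scope.

HB.instance Definition _ := Monoid.isComLaw.Build R R0 Rplus
  (fun x y z => esym (Rplus_assoc x y z)) Rplus_comm Rplus_0_l.
HB.instance Definition _ := Monoid.isComLaw.Build R R1 Rmult
  (fun x y z => esym (Rmult_assoc x y z)) Rmult_comm Rmult_1_l.
HB.instance Definition _ := Monoid.isMulLaw.Build R R0 Rmult Rmult_0_l Rmult_0_r.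
HB.instance Definition _ := Monoid.isAddLaw.Build R Rmult Rplus
  Rmult_plus_distr_r Rmult_plus_distr_l.

(* Finite sums and products of reals *)

Lemma sumR_le (I : Type) (r : seq I) (P : pred I) (F G : I -> R) :
  (forall i, P i -> F i <= G i) ->
  \big[Rplus/R0]_(i <- r | P i) F i <= \big[Rplus/R0]_(i <- r | P i) G i.
Proof. by move=> H; apply: (big_ind2 (fun x y => x <= y)) => //; [lra | move=> *; lra]. Qed.

Lemma sumR_ge0 (I : Type) (r : seq I) (P : pred I) (F : I -> R) :
  (forall i, P i -> 0 <= F i) -> 0 <= \big[Rplus/R0]_(i <- r | P i) F i.
Proof. by move=> H; apply: (big_ind (fun x => 0 <= x)) => //; [lra | move=> *; lra]. Qed.

Lemma sumR_abs (I : Type) (r : seq I) (P : pred I) (F : I -> R) :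
  Rabs (\big[Rplus/R0]_(i <- r | P i) F i) <= \big[Rplus/R0]_(i <- r | P i) Rabs (F i).
Proof.
apply: (big_ind2 (fun x y => Rabs x <= y)) => [||i _]; last lra.
- by rewrite Rabs_R0; lra.
- by move=> x1 x2 y1 y2 h1 h2; have := Rabs_triang x1 y1; lra.
Qed.

Lemma sumR_const (I : finType) (c : R) : \big[Rplus/R0]_(i : I) c = INR #|I| * c.
Proof.
rewrite big_const cardE; elim: (size _) => [|m IH] /=; first lra.
by rewrite IH; case: m {IH} => [|m] /=; lra.
Qed.

Lemma sumR_mull (I : Type) (r : seq I) (P : pred I) (F : I -> R) (c : R) :
  \big[Rplus/R0]_(i <- r | P i) F i * c = \big[Rplus/R0]_(i <- r | P i) (F i * c).
Proof. by rewrite big_distrl. Qed.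

Lemma sumR_mulr (I : Type) (r : seq I) (P : pred I) (F : I -> R) (c : R) :
  c * \big[Rplus/R0]_(i <- r | P i) F i = \big[Rplus/R0]_(i <- r | P i) (c * F i).
Proof. by rewrite big_distrr. Qed.

Lemma sumR_add (I : Type) (r : seq I) (P : pred I) (F G : I -> R) :
  \big[Rplus/R0]_(i <- r | P i) (F i + G i) =
  \big[Rplus/R0]_(i <- r | P i) F i + \big[Rplus/R0]_(i <- r | P i) G i.
Proof. exact: big_split. Qed.

Lemma sumR_sub (I : Type) (r : seq I) (P : pred I) (F G : I -> R) :
  \big[Rplus/R0]_(i <- r | P i) (F i - G i) =
  \big[Rplus/R0]_(i <- r | P i) F i - \big[Rplus/R0]_(i <- r | P i) G i.
Proof. by rewrite /Rminus sumR_add (big_morph Ropp Ropp_plus_distr Ropp_0). Qed.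

Lemma sumR_sub_le (I : finType) (P : pred I) (F : I -> R) :
  (forall i, 0 <= F i) -> \big[Rplus/R0]_(i | P i) F i <= \big[Rplus/R0]_i F i.
Proof. by move=> hF; rewrite big_mkcond /=; apply: sumR_le => i _; case: (P i); [lra | exact: hF]. Qed.

Lemma prod_unit_interval (I : Type) (r : seq I) (x : I -> R) :
  (forall i, 0 <= x i <= 1) -> 0 <= \big[Rmult/R1]_(i <- r) x i <= 1.
Proof.
move=> hx; apply: (big_ind (fun t => 0 <= t <= 1)) => [|a b ha hb|i _]; [lra | nra | exact: hx].
Qed.

Lemma prod_diff (I : Type) (r : seq I) (x y : I -> R) :
  (forall i, 0 <= x i <= 1) -> (forall i, 0 <= y i <= 1) ->
  Rabs (\big[Rmult/R1]_(i <- r) x i - \big[Rmult/R1]_(i <- r) y i)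
  <= \big[Rplus/R0]_(i <- r) Rabs (x i - y i).
Proof.
move=> hx hy; elim: r => [|i r IH]; first by rewrite !big_nil Rminus_diag Rabs_R0; lra.
rewrite !big_cons.
have hX := prod_unit_interval r hx; have hY := prod_unit_interval r hy.
move: IH hX hY; set X := \big[Rmult/R1]_(j <- r) x j; set Y := \big[Rmult/R1]_(j <- r) y j.
move=> IH hX hY; have hxi := hx i; have hyi := hy i.
have -> : x i * X - y i * Y = (x i - y i) * X + y i * (X - Y) by ring.
apply: Rle_trans (Rabs_triang _ _) _.
rewrite !Rabs_mult (Rabs_pos_eq X) ?(Rabs_pos_eq (y i)); try lra.
by have := Rabs_pos (x i - y i); have := Rabs_pos (X - Y); nra.
Qed.

(* prod (1 - c_i) <= exp (- sum c_i), from 1 + t <= exp t. *)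
Lemma prod_exp (I : Type) (r : seq I) (c : I -> R) :
  (forall i, 0 <= 1 - c i) ->
  0 <= \big[Rmult/R1]_(i <- r) (1 - c i) <= exp (- \big[Rplus/R0]_(i <- r) c i).
Proof.
move=> hc; elim: r => [|i r IH]; first by rewrite !big_nil Ropp_0 exp_0; lra.
rewrite !big_cons Ropp_plus_distr exp_plus.
have h1 := exp_ineq1_le (- c i); have h0 := hc i.
by split; [nra | apply: Rmult_le_compat; lra].
Qed.

Lemma cauchy_schwarz (I : Type) (r : seq I) (y : I -> R) :
  (\big[Rplus/R0]_(i <- r) y i) ^ 2 <= INR (size r) * \big[Rplus/R0]_(i <- r) (y i) ^ 2.
Proof.
elim: r => [|i r IH]; first by rewrite !big_nil /=; lra.
rewrite !big_cons; change (size (i :: r)) with (size r).+1.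
move: IH; set S := \big[Rplus/R0]_(j <- r) y j; set Q := \big[Rplus/R0]_(j <- r) y j ^ 2.
move=> IH; set m := INR (size r) in IH *.
have hQ : 0 <= Q by apply: sumR_ge0 => j _; nra.
have hm : 0 <= m := pos_INR _.
rewrite S_INR -/m.
have h : m * (2 * y i * S) <= m * (m * y i ^ 2 + Q).
  by have := pow2_ge_0 (m * y i - S); nra.
case: (Req_dec m 0) => hm0; last by have := Rmult_le_reg_l m _ _ ltac:(lra) h; nra.
have -> : S = 0 by rewrite hm0 in IH; nra.
by rewrite hm0; nra.
Qed.

(* Averages over uniformly random permutations *)

Definition ind (b : bool) : R := if b then 1 else 0.

Lemma ind_ge0 (b : bool) : 0 <= ind b.
Proof. by rewrite /ind; case: b; lra. Qed.

Lemma sum_ind_pick (I : finType) (i : I) (F : I -> R) :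
  \big[Rplus/R0]_(u : I) (ind (i == u) * F u) = F i.
Proof.
rewrite (bigD1 i) //= /ind eqxx big1; first lra.
by move=> u /negPf; rewrite eq_sym => ->; lra.
Qed.

Lemma sum_split_value n (j : 'I_n) (F : 'I_n -> R) (X : 'S_n -> R) :
  \big[Rplus/R0]_(u < n) (F u * \big[Rplus/R0]_(s : 'S_n) (ind (s j == u) * X s)) =
  \big[Rplus/R0]_(s : 'S_n) (F (s j) * X s).
Proof.
under eq_bigr do rewrite sumR_mulr.
rewrite exchange_big /=; apply: eq_bigr => s _.
by rewrite -(@sum_ind_pick _ (s j) (fun u => F u * X s)); apply: eq_bigr => u _; ring.
Qed.

(* Right translation is a bijection of the symmetric group. *)
Lemma sum_perm_mul n (t : 'S_n) (F : 'S_n -> R) :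
  \big[Rplus/R0]_(s : 'S_n) F s = \big[Rplus/R0]_(s : 'S_n) F (s * t)%g.
Proof. by rewrite [LHS](reindex_inj (mulIg t)). Qed.

Lemma count_perm n (l v : 'I_n) :
  \big[Rplus/R0]_(s : 'S_n) ind (s l == v) = INR (n`!) / INR n.
Proof.
have hn : INR n <> 0 by apply: not_0_INR; apply/eqP; rewrite -lt0n (leq_ltn_trans _ (ltn_ord l)).
have same_count v' : \big[Rplus/R0]_(s : 'S_n) ind (s l == v') =
                      \big[Rplus/R0]_(s : 'S_n) ind (s l == v).
  rewrite (@sum_perm_mul n (tperm v' v) (fun s => ind (s l == v'))); apply: eq_bigr => s _.
  by rewrite permM -{2}(tpermR v' v) (inj_eq (@perm_inj _ _)).
have total : \big[Rplus/R0]_(v' < n) \big[Rplus/R0]_(s : 'S_n) ind (s l == v') = INR (n`!).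
  rewrite exchange_big /= (eq_bigr (fun _ => 1)); first by rewrite sumR_const card_Sn Rmult_1_r.
  by move=> s _; rewrite -(@sum_ind_pick _ (s l) (fun _ => 1)); apply: eq_bigr => u _; lra.
move: total; rewrite (eq_bigr _ (fun v' _ => same_count v')) sumR_const card_ord => <-.
by field.
Qed.

(* Exchange argument: if [g] has mean zero, correlating [g (s j)] with [X s]
   only sees the change of [X] under a transposition of the permutation. *)
Lemma swap_identity n (j u0 : 'I_n) (g : 'I_n -> R) (X : 'S_n -> R) :
  \big[Rplus/R0]_(u < n) g u = 0 ->
  \big[Rplus/R0]_(s : 'S_n) (g (s j) * X s) =
  \big[Rplus/R0]_(u < n)
     (g u * \big[Rplus/R0]_(s : 'S_n) (ind (s j == u) * (X s - X (s * tperm u u0)%g))).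
Proof.
move=> hg.
set K := \big[Rplus/R0]_(s : 'S_n) (ind (s j == u0) * X s).
have translate u : K = \big[Rplus/R0]_(s : 'S_n) (ind (s j == u) * X (s * tperm u u0)%g).
  rewrite /K (@sum_perm_mul n (tperm u u0)); apply: eq_bigr => s _.
  by rewrite permM -[Y in (_ == Y)](tpermL u u0) (inj_eq (@perm_inj _ _)).
have center : \big[Rplus/R0]_(u < n) (g u * K) = 0 by rewrite -sumR_mull /= hg Rmult_0_l.
rewrite -sum_split_value.
have -> : \big[Rplus/R0]_(u < n) (g u * \big[Rplus/R0]_(s : 'S_n) (ind (s j == u) * X s)) =
          \big[Rplus/R0]_(u < n) (g u * \big[Rplus/R0]_(s : 'S_n) (ind (s j == u) * X s) - g u * K).
  by rewrite sumR_sub center Rminus_0_r.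
apply: eq_bigr => u _; rewrite (translate u) -Rmult_minus_distr_l -sumR_sub.
by congr (_ * _); apply: eq_bigr => s _; rewrite Rmult_minus_distr_l.
Qed.

Lemma swap_bound n (j u0 : 'I_n) (g : 'I_n -> R) (X D : 'S_n -> R) G :
  \big[Rplus/R0]_(u < n) g u = 0 -> (forall u, Rabs (g u) <= G) ->
  (forall (s : 'S_n) (u : 'I_n), s j = u -> Rabs (X s - X (s * tperm u u0)%g) <= D s) ->
  Rabs (\big[Rplus/R0]_(s : 'S_n) (g (s j) * X s)) <= G * \big[Rplus/R0]_(s : 'S_n) D s.
Proof.
move=> hg hG hD; rewrite (swap_identity j u0) //.
apply: Rle_trans (sumR_abs _ _ _) _.
apply: (@Rle_trans _ (\big[Rplus/R0]_(u < n) (G * \big[Rplus/R0]_(s : 'S_n) (ind (s j == u) * D s)))).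
  apply: sumR_le => u _; rewrite Rabs_mult.
  apply: Rmult_le_compat; [exact: Rabs_pos | exact: Rabs_pos | exact: hG |].
  apply: Rle_trans (sumR_abs _ _ _) _; apply: sumR_le => s _.
  rewrite Rabs_mult (Rabs_pos_eq _ (ind_ge0 _)) /ind; case: eqP => [hsu|_]; last lra.
  by rewrite !Rmult_1_l; apply: hD.
by rewrite sum_split_value sumR_mulr; right.
Qed.

Lemma swap_mean n (j : 'I_n) (g : 'I_n -> R) (X : 'S_n -> R) G D :
  \big[Rplus/R0]_(u < n) g u = 0 -> (forall u, Rabs (g u) <= G) ->
  (forall (s : 'S_n) (u u0 : 'I_n), Rabs (X s - X (s * tperm u u0)%g) <= D) ->
  Rabs (\big[Rplus/R0]_(s : 'S_n) (g (s j) * X s)) <= INR (n`!) * G * D.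
Proof.
move=> hg hG hD.
apply: Rle_trans (@swap_bound _ j j g X (fun _ => D) G hg hG (fun s u _ => hD s u j)) _.
by rewrite sumR_const card_Sn; right; ring.
Qed.

Lemma swap_pair n (l l' : 'I_n) (g : 'I_n -> R) G :
  l != l' -> \big[Rplus/R0]_(u < n) g u = 0 -> (forall u, Rabs (g u) <= G) ->
  Rabs (\big[Rplus/R0]_(s : 'S_n) (g (s l) * g (s l'))) <= 2 * G ^ 2 * (INR (n`!) / INR n).
Proof.
move=> hll hg hG.
have diff_le (x y : 'I_n) : Rabs (g x - g y) <= 2 * G.
  have := Rabs_triang (g x) (- g y); rewrite Rabs_Ropp.
  by have := hG x; have := hG y; rewrite /Rminus; lra.
have hD (s : 'S_n) (u : 'I_n) :
    s l = u -> Rabs (g (s l') - g ((s * tperm u l')%g l')) <= 2 * G * ind (s l' == l').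
  move=> hsu; rewrite permM /ind; case: eqP => [->|hne].
    by rewrite Rmult_1_r; apply: diff_le.
  rewrite tpermD ?Rminus_diag ?Rabs_R0; try lra.
    by apply/eqP=> h; move/eqP: hll; apply; apply: (@perm_inj _ s); rewrite hsu h.
  by apply/eqP=> h; apply: hne; rewrite -h.
apply: Rle_trans (@swap_bound _ l l' g (fun s => g (s l'))
                   (fun s => 2 * G * ind (s l' == l')) _ hg hG hD) _.
by rewrite -sumR_mulr count_perm; right; ring.
Qed.

Lemma second_moment n (D : seq 'I_n) (g : 'I_n -> R) G :
  (0 < n)%nat -> uniq D ->
  \big[Rplus/R0]_(u < n) g u = 0 -> (forall u, Rabs (g u) <= G) ->
  \big[Rplus/R0]_(s : 'S_n) (\big[Rplus/R0]_(l <- D) g (s l)) ^ 2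
   <= 3 * INR n * INR (n`!) * G ^ 2.
Proof.
move=> hn hD hg hG.
have hG0 : 0 <= G by have := Rabs_pos (g (Ordinal hn)); have := hG (Ordinal hn); lra.
have hnR : 0 < INR n by apply: lt_0_INR; apply/ltP.
set Q := INR (n`!) / INR n.
have hQ : 0 <= Q by apply: Rmult_le_pos; [apply: pos_INR | apply/Rlt_le/Rinv_0_lt_compat].
have hnQ : INR n * Q = INR (n`!) by rewrite /Q; field; lra.
pose B (l l' : 'I_n) := if l == l' then INR (n`!) * G ^ 2 else 2 * G ^ 2 * Q.
have hB0 l l' : 0 <= B l l'.
  by rewrite /B; case: eqP => _; [apply: Rmult_le_pos; [apply: pos_INR | nra] | nra].
have hB l l' : \big[Rplus/R0]_(s : 'S_n) (g (s l) * g (s l')) <= B l l'.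
  apply: Rle_trans (Rle_abs _) _; rewrite /B; case: eqP => [<- | /eqP hne]; last exact: swap_pair.
  rewrite Rabs_pos_eq; last by apply: sumR_ge0 => s _; nra.
  apply: (@Rle_trans _ (\big[Rplus/R0]_(s : 'S_n) G ^ 2)); last by rewrite sumR_const card_Sn; lra.
  by apply: sumR_le => s _; have := @pow_maj_Rabs _ _ 2 (hG (s l)); rewrite /= Rmult_1_r.
have expand (s : 'S_n) : (\big[Rplus/R0]_(l <- D) g (s l)) ^ 2 =
   \big[Rplus/R0]_(l <- D) \big[Rplus/R0]_(l' <- D) (g (s l) * g (s l')).
  by rewrite /= Rmult_1_r sumR_mull; apply: eq_bigr => l _; rewrite sumR_mulr.
rewrite (eq_bigr _ (fun s _ => expand s)) exchange_big /=.
under eq_bigr do rewrite exchange_big /=.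
apply: (@Rle_trans _ (\big[Rplus/R0]_(l <- D) \big[Rplus/R0]_(l' <- D) B l l')).
  by apply: sumR_le => l _; apply: sumR_le => l' _; apply: hB.
rewrite big_uniq //; apply: Rle_trans (sumR_sub_le _ _) _.
  by move=> l; rewrite big_uniq //; apply: sumR_ge0.
apply: (@Rle_trans _ (\big[Rplus/R0]_(l < n) (3 * INR (n`!) * G ^ 2))); last first.
  by rewrite sumR_const card_ord; lra.
apply: sumR_le => l _; rewrite big_uniq //.
apply: Rle_trans (sumR_sub_le _ _) _; first exact: hB0.
rewrite (bigD1 l) //= /B eqxx.
apply: (@Rle_trans _ (INR (n`!) * G ^ 2 + \big[Rplus/R0]_(l' < n | l' != l) (2 * G ^ 2 * Q))).
  by apply: Rplus_le_compat_l; apply: sumR_le => l' /negPf; rewrite eq_sym => ->; lra.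
apply: Rle_trans (Rplus_le_compat_l _ _ _ (sumR_sub_le _ _)) _; first by move=> _; nra.
by rewrite sumR_const card_ord; nra.
Qed.

(* One epoch as an affine map of the error *)

(* Noise accumulated by the affine recursion y <- q_i y - eta g_i along [w]:
   noise w = - eta sum_j g (w_j) prod_{l > j} q (w_l). *)
Fixpoint noise (I : Type) (q g : I -> R) (eta : R) (w : seq I) : R :=
  match w with
  | [::] => 0
  | i :: w' => - eta * g i * \big[Rmult/R1]_(j <- w') q j + noise q g eta w'
  end.

Lemma fold_affine (I : Type) (a b : I -> R) eta xs (w : seq I) x :
  foldl (fun y i => y - eta * (a i * y - b i)) x w - xs =
  \big[Rmult/R1]_(i <- w) (1 - eta * a i) * (x - xs)
  + noise (fun i => 1 - eta * a i) (fun i => a i * xs - b i) eta w.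
Proof.
elim: w x => [|i w IH] x /=; first by rewrite big_nil; lra.
by rewrite IH big_cons; ring.
Qed.

Definition epoch_noise n (a b : 'I_n -> R) (eta xs : R) (s : 'S_n) : R :=
  noise (fun l => 1 - eta * a (s l)) (fun l => a (s l) * xs - b (s l)) eta (enum 'I_n).

Definition contraction n (a : 'I_n -> R) (eta : R) : R := \big[Rmult/R1]_(i < n) (1 - eta * a i).

Lemma epoch_affine n (a b : 'I_n -> R) eta xs (s : 'S_n) x :
  epoch a b eta s x - xs = contraction a eta * (x - xs) + epoch_noise a b eta xs s.
Proof.
rewrite /epoch (fold_affine (fun l => a (s l)) (fun l => b (s l))) big_enum /=.
by rewrite [X in _ = X * _ + _](reindex_inj (@perm_inj _ s)).
Qed.

Lemma noise_closed (I : Type) (q g : I -> R) eta (w : seq I) (i0 : I) :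
  noise q g eta w = - eta * \big[Rplus/R0]_(0 <= j < size w)
     (g (nth i0 w j) * \big[Rmult/R1]_(l <- drop j.+1 w) q l).
Proof.
elim: w => [|i w IH] /=; first by rewrite big_geq //; lra.
by rewrite big_nat_recl // IH /= drop0; ring.
Qed.

Lemma noise_positions n (q g : 'I_n -> R) eta :
  (0 < n)%nat ->
  noise q g eta (enum 'I_n) =
  - eta * \big[Rplus/R0]_(j < n) (g j * \big[Rmult/R1]_(l <- drop j.+1 (enum 'I_n)) q l).
Proof.
move=> hn; rewrite (noise_closed q g eta _ (Ordinal hn)) size_enum_ord big_mkord.
by congr (_ * _); apply: eq_bigr => j _; rewrite nth_ord_enum.
Qed.

(* Abel summation: once the drift [eta (sum g) prod q] is removed, the noise is
   controlled by the partial sums of [g] over the suffixes of [w]. *)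
Lemma noise_abel (I : Type) (a b : I -> R) eta xs L (w : seq I) :
  0 <= eta -> (forall i, 0 <= a i <= L) -> (forall i, 0 <= 1 - eta * a i <= 1) ->
  Rabs (noise (fun i => 1 - eta * a i) (fun i => a i * xs - b i) eta w
        + eta * \big[Rplus/R0]_(i <- w) (a i * xs - b i) * \big[Rmult/R1]_(i <- w) (1 - eta * a i))
  <= eta ^ 2 * L * \big[Rplus/R0]_(0 <= j < size w)
                      Rabs (\big[Rplus/R0]_(i <- drop j w) (a i * xs - b i)).
Proof.
move=> he ha hq.
elim: w => [|i w IH]; first by rewrite !big_nil /= Rabs_pos_eq; lra.
rewrite /= big_nat_recl // drop0 !big_cons.
have hPw := prod_unit_interval w hq.
move: IH hPw; set Gw := \big[Rplus/R0]_(i0 <- w) _; set Pw := \big[Rmult/R1]_(i0 <- w) _.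
set nw := noise _ _ _ w; set S := \big[Rplus/R0]_(0 <= j < size w) _ => IH hPw.
have -> : - eta * (a i * xs - b i) * Pw + nw + eta * (a i * xs - b i + Gw) * ((1 - eta * a i) * Pw)
   = (nw + eta * Gw * Pw) + (- eta ^ 2 * a i * Pw * (a i * xs - b i + Gw)) by ring.
have last_term : Rabs (- eta ^ 2 * a i * Pw * (a i * xs - b i + Gw))
                 <= eta ^ 2 * L * Rabs (a i * xs - b i + Gw).
  have hai := ha i.
  rewrite !Rabs_mult Rabs_Ropp (Rabs_pos_eq (eta ^ 2)) ?(Rabs_pos_eq (a i)) ?(Rabs_pos_eq Pw); try nra.
  apply: Rmult_le_compat_r; first exact: Rabs_pos.
  by rewrite Rmult_assoc; apply: Rmult_le_compat_l; nra.
have := Rabs_triang (nw + eta * Gw * Pw) (- eta ^ 2 * a i * Pw * (a i * xs - b i + Gw)).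
change (eta * (eta * 1)) with (eta ^ 2); lra.
Qed.

(* Mean and second moment of the epoch noise *)

Section NoiseMoments.
Variables (n : nat) (a b : 'I_n -> R) (eta xs L G : R).
Hypotheses (n_gt0 : (0 < n)%nat) (eta_ge0 : 0 <= eta) (a_bound : forall i, 0 <= a i <= L)
  (q_bound : forall i, 0 <= 1 - eta * a i <= 1).
(* First-order optimality at [xs], and bounded component gradients there. *)
Hypotheses (grad_sum0 : \big[Rplus/R0]_(u < n) (a u * xs - b u) = 0)
  (grad_bound : forall u, Rabs (a u * xs - b u) <= G).

(* A transposition changes at most two factors [1 - eta a_v], each by at most [eta L]. *)
Lemma transposition_factor_change (u u0 : 'I_n) :
  \big[Rplus/R0]_(v < n) Rabs ((1 - eta * a v) - (1 - eta * a (tperm u u0 v))) <= 2 * (eta * L).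
Proof.
have change_le v w : Rabs ((1 - eta * a v) - (1 - eta * a w)) <= eta * L.
  have -> : (1 - eta * a v) - (1 - eta * a w) = eta * (a w - a v) by ring.
  rewrite Rabs_mult Rabs_pos_eq //; apply: Rmult_le_compat_l => //.
  by apply: Rabs_le; have := a_bound v; have := a_bound w; lra.
have hL : 0 <= eta * L by have := a_bound u; nra.
apply: (@Rle_trans _ (\big[Rplus/R0]_(v < n) (ind (u == v) * (eta * L) + ind (u0 == v) * (eta * L)))).
  apply: sumR_le => v _; case: (eqVneq u v) => [<-|huv].
    by rewrite tpermL /ind; have := change_le u u0; case: (u0 == u); lra.
  case: (eqVneq u0 v) => [<-|hu0v].
    by rewrite tpermR /ind; have := change_le u0 u; lra.
  by rewrite tpermD // Rminus_diag Rabs_R0 /ind; lra.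
by rewrite sumR_add !sum_ind_pick; lra.
Qed.

Lemma suffix_product_change (s : 'S_n) (u u0 : 'I_n) (j : nat) :
  Rabs (\big[Rmult/R1]_(l <- drop j (enum 'I_n)) (1 - eta * a (s l))
      - \big[Rmult/R1]_(l <- drop j (enum 'I_n)) (1 - eta * a ((s * tperm u u0)%g l)))
  <= 2 * (eta * L).
Proof.
apply: Rle_trans (prod_diff _ (fun l => q_bound (s l)) (fun l => q_bound _)) _.
apply: Rle_trans (transposition_factor_change u u0).
apply: (@Rle_trans _ (\big[Rplus/R0]_(l <- enum 'I_n)
                        Rabs ((1 - eta * a (s l)) - (1 - eta * a (tperm u u0 (s l)))))).
  rewrite -{2}(cat_take_drop j (enum 'I_n)) big_cat /= -[X in X <= _]Rplus_0_l.
  apply: Rplus_le_compat; first by apply: sumR_ge0 => l _; apply: Rabs_pos.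
  by apply: Req_le; apply: eq_bigr => l _; rewrite permM.
apply: Req_le; rewrite [RHS](reindex_inj (@perm_inj _ s)) /=; exact: big_enum.
Qed.

Lemma noise_mean_bound :
  Rabs (\big[Rplus/R0]_(s : 'S_n) epoch_noise a b eta xs s)
  <= INR (n`!) * (2 * eta ^ 2 * INR n * L * G).
Proof.
under eq_bigr do rewrite /epoch_noise (noise_positions _ _ _ n_gt0).
rewrite -sumR_mulr exchange_big /= Rabs_mult Rabs_Ropp (Rabs_pos_eq eta) //.
apply: (@Rle_trans _ (eta * \big[Rplus/R0]_(j < n) (INR (n`!) * G * (2 * (eta * L))))).
  apply: Rmult_le_compat_l => //.
  apply: Rle_trans (sumR_abs _ _ _) _; apply: sumR_le => j _.
  apply: (@swap_mean _ j (fun i => a i * xs - b i)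
     (fun s => \big[Rmult/R1]_(l <- drop j.+1 (enum 'I_n)) (1 - eta * a (s l)))) => //.
  by move=> s u u0; apply: suffix_product_change.
by rewrite sumR_const card_ord; right; ring.
Qed.

(* Pathwise bound from the Abel summation and Cauchy-Schwarz:
   N_s^2 <= eta^4 L^2 n sum_j (sum_{l >= j} g (s l))^2. *)
Lemma noise_sq_le (s : 'S_n) :
  (epoch_noise a b eta xs s) ^ 2 <= eta ^ 4 * L ^ 2 *
    (INR n * \big[Rplus/R0]_(0 <= j < n)
               (\big[Rplus/R0]_(l <- drop j (enum 'I_n)) (a (s l) * xs - b (s l))) ^ 2).
Proof.
have drift0 : \big[Rplus/R0]_(l <- enum 'I_n) (a (s l) * xs - b (s l)) = 0.
  by rewrite -grad_sum0 (reindex_inj (@perm_inj _ s)) /=; exact: big_enum.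
have := noise_abel (fun l => b (s l)) xs (enum 'I_n) eta_ge0
          (fun l => a_bound (s l)) (fun l => q_bound (s l)).
rewrite drift0 Rmult_0_r Rmult_0_l Rplus_0_r size_enum_ord -/(epoch_noise a b eta xs s).
set T := fun j => \big[Rplus/R0]_(l <- drop j (enum 'I_n)) (a (s l) * xs - b (s l)).
move=> habel; have := @pow_maj_Rabs _ _ 2 habel.
have hcs := cauchy_schwarz (index_iota 0 n) (fun j => Rabs (T j)).
rewrite size_iota subn0 in hcs.
have sq_abs : \big[Rplus/R0]_(0 <= j < n) Rabs (T j) ^ 2 = \big[Rplus/R0]_(0 <= j < n) T j ^ 2.
  by apply: eq_bigr => j _; rewrite pow2_abs.
rewrite sq_abs in hcs.
have hL : 0 <= eta ^ 4 * L ^ 2 by nra.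
have -> : (eta ^ 2 * L * \big[Rplus/R0]_(0 <= j < n) Rabs (T j)) ^ 2 =
          eta ^ 4 * L ^ 2 * (\big[Rplus/R0]_(0 <= j < n) Rabs (T j)) ^ 2 by ring.
by move=> h; apply: Rle_trans h _; apply: Rmult_le_compat_l.
Qed.

Lemma noise_second_moment :
  \big[Rplus/R0]_(s : 'S_n) (epoch_noise a b eta xs s) ^ 2
  <= INR (n`!) * (3 * eta ^ 4 * L ^ 2 * INR n ^ 3 * G ^ 2).
Proof.
apply: Rle_trans; first by apply: sumR_le => s _; apply: noise_sq_le.
rewrite -sumR_mulr; under eq_bigr do rewrite sumR_mulr; rewrite exchange_big /=.
apply: (@Rle_trans _ (eta ^ 4 * L ^ 2 * \big[Rplus/R0]_(0 <= j < n)
                         (INR n * (3 * INR n * INR (n`!) * G ^ 2)))).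
  apply: Rmult_le_compat_l; first nra.
  apply: sumR_le => j _; rewrite -sumR_mulr; apply: Rmult_le_compat_l; first exact: pos_INR.
  apply: (@second_moment n _ (fun i => a i * xs - b i)) => //.
  exact: drop_uniq (enum_uniq _).
by rewrite big_mkord sumR_const card_ord; right; ring.
Qed.

End NoiseMoments.

(* From one epoch to k epochs *)

Lemma young_cross (c m mu K : R) :
  0 < K -> Rabs m <= mu -> 2 * c * m <= / K * c ^ 2 + K * mu ^ 2.
Proof.
move=> hK hm.
have h1 : 2 * c * m <= 2 * Rabs c * mu.
  have := Rle_abs (c * m); rewrite Rabs_mult.
  by have := Rabs_pos c; have := Rabs_pos m; nra.
have h2 : K * (2 * Rabs c * mu) <= K * (/ K * c ^ 2 + K * mu ^ 2).
  have -> : K * (/ K * c ^ 2 + K * mu ^ 2) = Rabs c ^ 2 + K * (K * mu ^ 2).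
    by rewrite pow2_abs; field; lra.
  by have := pow2_ge_0 (Rabs c - K * mu); nra.
by have := Rmult_le_reg_l K _ _ hK h2; lra.
Qed.

Lemma epoch_second_moment n (a b : 'I_n -> R) eta xs L G x K :
  (0 < n)%nat -> 0 <= eta -> (forall i, 0 <= a i <= L) -> (forall i, 0 <= 1 - eta * a i <= 1) ->
  \big[Rplus/R0]_(u < n) (a u * xs - b u) = 0 -> (forall u, Rabs (a u * xs - b u) <= G) ->
  0 < K ->
  / INR (n`!) * psum (fun s => (epoch a b eta s x - xs) ^ 2)
  <= (1 + / K) * contraction a eta ^ 2 * (x - xs) ^ 2
     + (K * (2 * eta ^ 2 * INR n * L * G) ^ 2 + 3 * eta ^ 4 * L ^ 2 * INR n ^ 3 * G ^ 2).
Proof.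
move=> hn he ha hq hg hG hK.
have hf : 0 < INR (n`!) by apply: lt_0_INR; apply/ltP; exact: fact_gt0.
have hmean := noise_mean_bound hn he ha hq hg hG.
have hvar := noise_second_moment hn he ha hq hg hG.
move: hmean hvar; set mu := 2 * eta ^ 2 * INR n * L * G; set v := 3 * eta ^ 4 * _ * _ * _.
set SN := \big[Rplus/R0]_(s : 'S_n) _; set SN2 := \big[Rplus/R0]_(s : 'S_n) _ => hmean hvar.
set P := contraction a eta; set y := x - xs.
have expand (s : 'S_n) : (epoch a b eta s x - xs) ^ 2 =
    P ^ 2 * y ^ 2 + (2 * P * y) * epoch_noise a b eta xs s + epoch_noise a b eta xs s ^ 2.
  by rewrite epoch_affine /P /y; ring.
rewrite /psum (eq_bigr _ (fun s _ => expand s)) !sumR_add sumR_const -sumR_mulr card_Sn -/SN -/SN2.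
have -> : / INR n`! * (INR n`! * (P ^ 2 * y ^ 2) + 2 * P * y * SN + SN2)
   = P ^ 2 * y ^ 2 + 2 * (P * y) * (SN / INR n`!) + SN2 / INR n`! by field; lra.
have hm : Rabs (SN / INR n`!) <= mu.
  rewrite Rabs_mult Rabs_inv (Rabs_pos_eq (INR n`!)); last lra.
  by apply: (Rmult_le_reg_r (INR n`!)) => //; rewrite Rmult_assoc Rinv_l; lra.
have hs : SN2 / INR n`! <= v.
  by apply: (Rmult_le_reg_r (INR n`!)) => //; rewrite /Rdiv Rmult_assoc Rinv_l; lra.
have := young_cross (P * y) hK hm.
have -> : (P * y) ^ 2 = P ^ 2 * y ^ 2 by ring.
lra.
Qed.

Lemma noise_budget_ge0 (n : nat) (eta L G K : R) :
  0 <= eta -> 0 <= K ->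
  0 <= K * (2 * eta ^ 2 * INR n * L * G) ^ 2 + 3 * eta ^ 4 * L ^ 2 * INR n ^ 3 * G ^ 2.
Proof.
move=> he hK.
have hn3 : 0 <= INR n ^ 3 by apply: pow_le; apply: pos_INR.
have he4 : 0 <= eta ^ 4 by apply: pow_le.
apply: Rplus_le_le_0_compat; first by apply: Rmult_le_pos; [lra | apply: pow2_ge_0].
apply: Rmult_le_pos; last exact: pow2_ge_0.
apply: Rmult_le_pos; last exact: hn3.
by apply: Rmult_le_pos; [apply: Rmult_le_pos; lra | exact: pow2_ge_0].
Qed.

Lemma psum_affine n (F : 'S_n -> R) c1 c2 :
  psum (fun s => c1 * F s + c2) = c1 * psum F + INR (n`!) * c2.
Proof. by rewrite /psum sumR_add sumR_const card_Sn -sumR_mulr. Qed.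

Lemma expect_after_bound n (step : 'S_n -> R -> R) (g : R -> R) lam xs r D :
  0 <= r <= 1 -> 0 <= lam -> 0 <= D ->
  (forall x, g x = lam / 2 * (x - xs) ^ 2) ->
  (forall x, / INR (n`!) * psum (fun s => (step s x - xs) ^ 2) <= r * (x - xs) ^ 2 + D) ->
  forall j x, expect_after step g j x <= lam / 2 * (r ^ j * (x - xs) ^ 2 + INR j * D).
Proof.
move=> hr hl hD hg hstep.
have hf : 0 < INR (n`!) by apply: lt_0_INR; apply/ltP; exact: fact_gt0.
elim=> [|j IH] x; first by rewrite /= hg; lra.
have hrj : 0 <= r ^ j <= 1 by split; [apply: pow_le | rewrite -(pow1 j); apply: pow_incr]; lra.
apply: (@Rle_trans _ (/ INR (n`!) * psum (fun s => lam / 2 * (r ^ j * (step s x - xs) ^ 2 + INR j * D)))).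
  apply: Rmult_le_compat_l; first by apply/Rlt_le/Rinv_0_lt_compat.
  by apply: sumR_le => s _; apply: IH.
have -> : / INR (n`!) * psum (fun s => lam / 2 * (r ^ j * (step s x - xs) ^ 2 + INR j * D))
   = lam / 2 * (r ^ j * (/ INR (n`!) * psum (fun s => (step s x - xs) ^ 2)) + INR j * D).
  have -> : psum (fun s => lam / 2 * (r ^ j * (step s x - xs) ^ 2 + INR j * D)) =
            psum (fun s => lam / 2 * r ^ j * (step s x - xs) ^ 2 + lam / 2 * INR j * D).
    by rewrite /psum; apply: eq_bigr => s _; ring.
  by rewrite psum_affine; field; lra.
have h2 := Rmult_le_compat_l _ _ _ (proj1 hrj) (hstep x).
apply: Rmult_le_compat_l; first lra.
rewrite S_INR -tech_pow_Rmult.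
have hrD : r ^ j * D <= D by nra.
by have := pow2_ge_0 (x - xs); nra.
Qed.

(* Consequences of the hypotheses on F *)

Lemma rsum_lin n (a b : 'I_n -> R) (c d : R) :
  rsum (fun i => a i * c - b i * d) = rsum a * c - rsum b * d.
Proof. by rewrite /rsum sumR_sub -!sumR_mull. Qed.

Lemma Fobj_expand n (a b : 'I_n -> R) x :
  Fobj a b x = / INR n * (rsum a / 2 * x * x - rsum b * x).
Proof.
have -> : rsum a / 2 * x * x - rsum b * x = rsum a * (x * x / 2) - rsum b * x by field.
rewrite /Fobj -rsum_lin; congr (_ * _).
by rewrite /rsum; apply: eq_bigr => i _; rewrite /fcomp; field.
Qed.

Lemma quadratic_argmin (lam c xs : R) :
  0 < lam -> (forall y, lam / 2 * xs * xs - c * xs <= lam / 2 * y * y - c * y) -> c = lam * xs.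
Proof.
move=> hl hmin; have := hmin (c / lam).
have -> : lam / 2 * (c / lam) * (c / lam) - c * (c / lam) = - (c * c) / (2 * lam) by field; lra.
move=> h.
have : lam * (lam / 2 * xs * xs - c * xs) <= lam * (- (c * c) / (2 * lam)) by apply: Rmult_le_compat_l; lra.
have -> : lam * (- (c * c) / (2 * lam)) = - (c * c) / 2 by field; lra.
by move=> h2; have := pow2_ge_0 (lam * xs - c); nra.
Qed.

Section Optimality.
Variables (n : nat) (a b : 'I_n -> R) (lam xs : R).
Hypotheses (n_gt0 : (0 < n)%nat) (lam_gt0 : 0 < lam).
Hypothesis F_quadratic : forall x, Fobj a b x = (lam / 2) * x * x - ((/ INR n) * rsum b) * x.
Hypothesis xs_min : forall y, Fobj a b xs <= Fobj a b y.

Let n_pos : 0 < INR n. Proof. by apply: lt_0_INR; apply/ltP. Qed.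

Lemma curvature_sum : rsum a = INR n * lam.
Proof.
have h1 := F_quadratic 1; have h2 := F_quadratic (-1).
rewrite !Fobj_expand in h1 h2.
have : / INR n * rsum a = lam by nra.
by move=> <-; field; lra.
Qed.

Lemma linear_coefficient : / INR n * rsum b = lam * xs.
Proof. by apply: quadratic_argmin lam_gt0 _ => y; rewrite -!F_quadratic; exact: xs_min. Qed.

Lemma gradients_sum0 : \big[Rplus/R0]_(u < n) (a u * xs - b u) = 0.
Proof.
have -> : \big[Rplus/R0]_(u < n) (a u * xs - b u) = rsum (fun i => a i * xs - b i * 1).
  by rewrite /rsum; apply: eq_bigr => i _; ring.
rewrite rsum_lin curvature_sum.
have := linear_coefficient; move: (rsum b) => B hB.
have -> : B = INR n * (lam * xs) by rewrite -hB; field; lra.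
ring.
Qed.

Lemma optimality_gap x : Fobj a b x - Fobj a b xs = lam / 2 * (x - xs) ^ 2.
Proof. by rewrite !F_quadratic linear_coefficient; field. Qed.

End Optimality.

(* The step size eta = ln(nk) / (lam n k) *)

Lemma exp_le (x y : R) : x <= y -> exp x <= exp y.
Proof. by case/Rle_lt_or_eq_dec => h; [apply/Rlt_le/exp_increasing | rewrite h]; lra. Qed.

Lemma exp_pow (x : R) (k : nat) : exp x ^ k = exp (INR k * x).
Proof.
elim: k => [|k IH]; first by rewrite /= Rmult_0_l exp_0.
by rewrite -tech_pow_Rmult IH S_INR -exp_plus; congr exp; ring.
Qed.

Lemma ln_gt_half (N K : R) : 2 <= N -> 1 <= K -> / 2 < ln (N * K).
Proof.
move=> hN hK; have hNK : 2 <= N * K by nra.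
case: (Rle_lt_or_eq_dec 2 (N * K) hNK) => h; last by rewrite -h; exact: ln_lt_2.
by have := ln_increasing 2 (N * K) ltac:(lra) h; have := ln_lt_2; lra.
Qed.

(* Under L / lam <= k / (2 ln(nk)) the step size satisfies eta L <= 1/(2n) <= 1,
   which keeps all the factors 1 - eta a_i in [0,1] (next lemma). *)
Lemma step_size_small (N K lam L : R) :
  2 <= N -> 1 <= K -> 0 < lam -> L / lam <= K / (2 * ln (N * K)) ->
  ln (N * K) / (lam * N * K) * L <= 1.
Proof.
move=> hN hK hl hratio; have hell := ln_gt_half hN hK.
apply: (@Rle_trans _ (/ (2 * N))); last by rewrite -Rinv_1; apply: Rinv_le_contravar; lra.
have -> : ln (N * K) / (lam * N * K) * L = ln (N * K) / (N * K) * (L / lam) by field; lra.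
apply: (@Rle_trans _ (ln (N * K) / (N * K) * (K / (2 * ln (N * K))))); last by right; field; lra.
apply: Rmult_le_compat_l => //; apply: Rmult_le_pos; first lra.
by apply/Rlt_le/Rinv_0_lt_compat; nra.
Qed.

Lemma factors_unit_interval n (a : 'I_n -> R) (eta L : R) :
  0 <= eta -> (forall i, 0 <= a i <= L) -> eta * L <= 1 -> forall i, 0 <= 1 - eta * a i <= 1.
Proof.
move=> he ha hL i; have [h0 hLi] := ha i.
have : 0 <= eta * a i by apply: Rmult_le_pos.
have : eta * a i <= eta * L by apply: Rmult_le_compat_l.
lra.
Qed.

Lemma contraction_exp n (a : 'I_n -> R) eta :
  (forall i, 0 <= 1 - eta * a i) -> 0 <= contraction a eta <= exp (- (eta * rsum a)).
Proof. by move=> hq; rewrite /rsum sumR_mulr; apply: prod_exp. Qed.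

(* With P <= exp(-ell/k) and ell > 1/2, the one-epoch factor r = (1 + 1/k) P^2
   lies in [0,1] and after k epochs r^k <= e exp(-2 ell) <= 3 exp(-ell)^2. *)
Lemma contraction_power (P ell : R) (k : nat) :
  (1 <= k)%nat -> / 2 < ell -> 0 <= P <= exp (- (ell / INR k)) ->
  0 <= (1 + / INR k) * P ^ 2 <= 1 /\ ((1 + / INR k) * P ^ 2) ^ k <= 3 * exp (- ell) ^ 2.
Proof.
move=> hk hell hP.
have hK : 1 <= INR k by have := le_INR 1 k (elimT leP hk) => /= h; lra.
have hKi : 0 < / INR k by apply: Rinv_0_lt_compat; lra.
have hKe : 1 + / INR k <= exp (/ INR k) by have := exp_ineq1_le (/ INR k); lra.
have hP2 : P ^ 2 <= exp (- (ell / INR k)) ^ 2 by apply: pow_incr.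
split.
  split; first by apply: Rmult_le_pos; [lra | apply: pow2_ge_0].
  apply: (@Rle_trans _ (exp (/ INR k) * exp (- (ell / INR k)) ^ 2)).
    by apply: Rmult_le_compat => //; [lra | apply: pow2_ge_0].
  rewrite exp_pow -exp_plus -exp_0; apply: exp_le.
  have -> : / INR k + INR 2 * - (ell / INR k) = (1 - 2 * ell) * / INR k by rewrite /=; field; lra.
  nra.
rewrite Rpow_mult_distr -pow_mult Nat.mul_comm pow_mult.
apply: Rmult_le_compat; try by apply: pow_le; try apply: pow_le; lra.
- apply: (@Rle_trans _ (exp (/ INR k) ^ k)); first by apply: pow_incr; lra.
  rewrite exp_pow Rinv_r; [exact: exp_le_3 | lra].
- apply: pow_incr; split; first by apply: pow_le; lra.
  apply: Rle_trans (pow_incr _ _ k hP) _; rewrite exp_pow; right; congr exp; field; lra.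
Qed.

(* Collecting the three error terms: the initial error decays like 1/(nk)^2,
   the squared bias of the noise contributes G^2 L^2/lam^3 ln(nk)^4/(nk)^2 and
   its variance G^2 L^2/lam^3 ln(nk)^4/(n k^3). *)
Lemma final_estimate (lam N K ell eta L G y2 rk : R) :
  0 < lam -> 0 < N -> 0 < K -> / 2 < ell -> eta = ell / (lam * N * K) ->
  0 <= y2 -> rk <= 3 * (/ (N * K)) ^ 2 ->
  lam / 2 * (rk * y2 + K * (K * (2 * eta ^ 2 * N * L * G) ^ 2
                            + 3 * eta ^ 4 * L ^ 2 * N ^ 3 * G ^ 2))
  <= 100 * ell ^ 4 * (lam / (N ^ 2 * K ^ 2) * y2
       + G ^ 2 * L ^ 2 / lam ^ 3 * (/ (N ^ 2 * K ^ 2) + / (N * K ^ 3))).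
Proof.
move=> hl hN hK hell heta hy2 hrk.
have hl3 : 0 < lam ^ 3 by apply: pow_lt.
set U1 := lam / (N ^ 2 * K ^ 2) * y2.
set U2 := G ^ 2 * L ^ 2 / lam ^ 3 * / (N ^ 2 * K ^ 2).
set U3 := G ^ 2 * L ^ 2 / lam ^ 3 * / (N * K ^ 3).
have hGL : 0 <= G ^ 2 * L ^ 2 / lam ^ 3.
  by apply: Rmult_le_pos; [nra | apply/Rlt_le/Rinv_0_lt_compat].
have hU1 : 0 <= U1.
  apply: Rmult_le_pos => //; apply: Rmult_le_pos; first lra.
  by apply/Rlt_le/Rinv_0_lt_compat; apply: Rmult_lt_0_compat; apply: pow_lt.
have hU2 : 0 <= U2.
  by apply: Rmult_le_pos => //; apply/Rlt_le/Rinv_0_lt_compat; apply: Rmult_lt_0_compat; apply: pow_lt.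
have hU3 : 0 <= U3.
  by apply: Rmult_le_pos => //; apply/Rlt_le/Rinv_0_lt_compat; apply: Rmult_lt_0_compat; [|apply: pow_lt].
have initial : lam / 2 * (rk * y2) <= 3 / 2 * U1.
  have -> : 3 / 2 * U1 = lam / 2 * (3 * (/ (N * K)) ^ 2 * y2) by rewrite /U1; field; lra.
  by apply: Rmult_le_compat_l; [lra | apply: Rmult_le_compat_r].
have bias : lam / 2 * (K * (K * (2 * eta ^ 2 * N * L * G) ^ 2)) = 2 * ell ^ 4 * U2.
  by rewrite heta /U2; field; lra.
have variance : lam / 2 * (K * (3 * eta ^ 4 * L ^ 2 * N ^ 3 * G ^ 2)) = 3 / 2 * ell ^ 4 * U3.
  by rewrite heta /U3; field; lra.
have hl4 : / 16 <= ell ^ 4.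
  have -> : / 16 = (/ 2) ^ 4 by field.
  by apply: pow_incr; lra.
have -> : 100 * ell ^ 4 * (U1 + G ^ 2 * L ^ 2 / lam ^ 3 * (/ (N ^ 2 * K ^ 2) + / (N * K ^ 3)))
   = 100 * ell ^ 4 * (U1 + U2 + U3) by rewrite /U2 /U3; ring.
have -> : lam / 2 * (rk * y2 + K * (K * (2 * eta ^ 2 * N * L * G) ^ 2
                                  + 3 * eta ^ 4 * L ^ 2 * N ^ 3 * G ^ 2))
   = lam / 2 * (rk * y2) + lam / 2 * (K * (K * (2 * eta ^ 2 * N * L * G) ^ 2))
     + lam / 2 * (K * (3 * eta ^ 4 * L ^ 2 * N ^ 3 * G ^ 2)) by ring.
rewrite bias variance; nra.
Qed.

Theorem theorem5 :
  exists (C : R) (p : nat), 0 < C /\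
  forall (n k : nat) (a b : 'I_n -> R) (lam L G x0 xs : R),
    (2 <= n)%nat -> (1 <= k)%nat ->
    0 < lam -> 0 < L -> 0 < G ->
    (* F(x) = (1/n) sum f_i(x) = lam/2 x^2 - b x  with b = (1/n) sum b_i *)
    (forall x, Fobj a b x = (lam / 2) * x * x - ((/ INR n) * rsum b) * x) ->
    (* xs = argmin F *)
    (forall y, Fobj a b xs <= Fobj a b y) ->
    (* each f_i convex with L-Lipschitz derivative, |f_i'(xs)| <= G *)
    (forall i, 0 <= a i) ->
    (forall i, a i <= L) ->
    (forall i, Rabs (a i * xs - b i) <= G) ->
    L / lam <= INR k / (2 * ln (INR n * INR k)) ->
    expect_after (epoch a b (ln (INR n * INR k) / (lam * INR n * INR k))) (fun x => Fobj a b x - Fobj a b xs) k x0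
    <= C * (ln (INR n * INR k)) ^ p *
       ( lam / (INR n ^ 2 * INR k ^ 2) * (x0 - xs) ^ 2
       + G ^ 2 * L ^ 2 / lam ^ 3
         * (/ (INR n ^ 2 * INR k ^ 2) + / (INR n * INR k ^ 3)) ).
Proof.
exists 100, 4%nat; split; first lra.
move=> n k a b lam L G x0 xs hn hk hl _ _ hF hmin ha0 haL hgG hratio.
have hN : 2 <= INR n by have := le_INR 2 n (elimT leP hn) => /= h; lra.
have hK : 1 <= INR k by have := le_INR 1 k (elimT leP hk) => /= h; lra.
have hn0 : (0 < n)%nat by apply: leq_trans hn.
set ell := ln (INR n * INR k); set eta := ell / (lam * INR n * INR k).
have hell : / 2 < ell := ln_gt_half hN hK.
have he : 0 <= eta.
  apply: Rmult_le_pos; [lra | apply/Rlt_le/Rinv_0_lt_compat].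
  by apply: Rmult_lt_0_compat; [apply: Rmult_lt_0_compat|]; lra.
have ha : forall i, 0 <= a i <= L by move=> i; split; [exact: ha0 | exact: haL].
have hq := factors_unit_interval he ha (step_size_small hN hK hl hratio).
have hP : 0 <= contraction a eta <= exp (- (ell / INR k)).
  have := contraction_exp (fun i => proj1 (hq i)); rewrite (curvature_sum hn0 hF).
  by rewrite (_ : eta * (INR n * lam) = ell / INR k) // /eta; field; lra.
have [hr hrk] := contraction_power hk hell hP.
rewrite exp_Ropp /ell exp_ln -/ell in hrk; last by nra.
have hstep x := epoch_second_moment x hn0 he ha hq (gradients_sum0 hn0 hl hF hmin) hgG
                  (Rlt_le_trans _ _ _ Rlt_0_1 hK).
have hD := @noise_budget_ge0 n eta L G (INR k) he (pos_INR k).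
apply: Rle_trans (expect_after_bound hr (Rlt_le _ _ hl) hD (optimality_gap hl hF hmin) hstep k x0) _.
by apply: final_estimate => //; try lra; apply: pow2_ge_0.
Qed.
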